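(* Let $R$ be a ring with identity and an involution $*$, and let $a\in R$. Then: (i) $a$ is left $(a^*,1)$-invertible if and only if $a$ has a $\{1,4\}$-inverse; (ii) $a$ is right $(1,a^* )$-invertible if and only if $a$ has a $\{1,3\}$-inverse; (iii) $a$ is Moore–Penrose invertible if and only if $a$ is left $(a^*,1)$-invertible and right $(1,a^* )$-invertible.
   Context: An involution is a map $*:R\to R$ with $(x^* )^*=x$, $(xy)^*=y^*x^*$, $(x+y)^*=x^*+y^*$. For $x\in R$: $xR=\{xr:r\in R\}$, $Rx=\{rx:r\in R\}$. For $a,b,c\in R$, $a$ is left $(b,c)$-invertible if there is $y$ with $Ry\subseteq Rc$ and $yab=b$; right $(b,c)$-invertible if there is $y$ with $yR\subseteq bR$ and $cay=c$. A $\{1,3\}$-inverse of $a$ is $y$ with $aya=a$ and $(ay)^*=ay$; a $\{1,4\}$-inverse is $y$ with $aya=a$ and $(ya)^*=ya$; $a$ is Moore–Penrose invertible if there is $y$ with $aya=a$, $yay=y$, $(ay)^*=ay$, $(ya)^*=ya$. *)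

From mathcomp Require Import all_boot all_algebra.
Set Implicit Arguments. Unset Strict Implicit. Unset Printing Implicit Defensive.
Import GRing.Theory.
Local Open Scope ring_scope.

Definition involution (R : pzRingType) (inv : R -> R) : Prop :=
  (forall x, inv (inv x) = x) /\
  (forall x y, inv (x * y) = inv y * inv x) /\
  (forall x y, inv (x + y) = inv x + inv y).

(* Principal one-sided ideal inclusions: Rx <= Ry and xR <= yR. *)
Definition lsub (R : pzRingType) (x y : R) : Prop :=
  forall r : R, exists s : R, r * x = s * y.
Definition rsub (R : pzRingType) (x y : R) : Prop :=
  forall r : R, exists s : R, x * r = y * s.

Definition left_bc_invertible (R : pzRingType) (a b c : R) : Prop :=
  exists y : R, lsub y c /\ y * a * b = b.
Definition right_bc_invertible (R : pzRingType) (a b c : R) : Prop :=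
  exists y : R, rsub y b /\ c * a * y = c.

Definition inverse13 (R : pzRingType) (inv : R -> R) (a y : R) : Prop :=
  a * y * a = a /\ inv (a * y) = a * y.
Definition inverse14 (R : pzRingType) (inv : R -> R) (a y : R) : Prop :=
  a * y * a = a /\ inv (y * a) = y * a.
Definition MP_invertible (R : pzRingType) (inv : R -> R) (a : R) : Prop :=
  exists y : R, a * y * a = a /\ y * a * y = y /\
    inv (a * y) = a * y /\ inv (y * a) = y * a.

(** A left (a^*,1)-inverse y, i.e. y a a^* = a^*, is itself a {1,4}-inverse:
    applying the involution gives a a^* y^* = a, whence y a = y a a^* y^* is
    self-adjoint and a y a = a a^* y^* = a; conversely a {1,4}-inverse y satisfies
    y a a^* = (a y a)^* = a^*.  The right-handed statement is the mirror image.
    Given a {1,4}-inverse y and a {1,3}-inverse z, the element y a z is the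
    Moore–Penrose inverse, since a (y a z) = a z and (y a z) a = y a. *)

From mathcomp Require Import all_boot all_algebra.
Local Open Scope ring_scope.
Import GRing.Theory.
Set Implicit Arguments. Unset Strict Implicit.

Section StarRing.

Variables (R : pzRingType) (inv : R -> R).
Hypothesis invK : forall x, inv (inv x) = x.
Hypothesis invM : forall x y, inv (x * y) = inv y * inv x.

Lemma inverse14P (a y : R) : y * a * inv a = inv a <-> inverse14 inv a y.
Proof.
split=> [yaa | [aya sa]].
- have aay : a * inv a * inv y = a by rewrite -[RHS]invK -[in RHS]yaa !invM invK mulrA.
  have sa : inv (y * a) = y * a by rewrite invM -{1}yaa -!mulrA (mulrA a) aay.
  by split=> //; rewrite -mulrA -sa invM mulrA aay.
- by rewrite -{3}aya -(mulrA a) invM sa.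
Qed.

Lemma inverse13P (a y : R) : inv a * a * y = inv a <-> inverse13 inv a y.
Proof.
split=> [aay | [aya sa]].
- have yaa : inv y * inv a * a = a by rewrite -[RHS]invK -[in RHS]aay !invM invK mulrA.
  have sa : inv (a * y) = a * y by rewrite invM -{1}aay !mulrA yaa.
  by split=> //; rewrite -sa invM yaa.
- by rewrite -{3}aya invM sa mulrA.
Qed.

Lemma left_star1_invertibleP (a : R) :
  left_bc_invertible a (inv a) 1 <-> exists y, inverse14 inv a y.
Proof.
split=> [[y [_ /inverse14P]] | [y /inverse14P yaa]]; first by exists y.
by exists y; split=> // r; exists (r * y); rewrite mulr1.
Qed.

Lemma right_1star_invertibleP (a : R) :
  right_bc_invertible a 1 (inv a) <-> exists y, inverse13 inv a y.
Proof.
split=> [[y [_ /inverse13P]] | [y /inverse13P aay]]; first by exists y.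
by exists y; split=> // r; exists (y * r); rewrite mul1r.
Qed.

Lemma MP_inverse13_14 (a y z : R) :
  inverse14 inv a y -> inverse13 inv a z -> MP_invertible inv a.
Proof.
move=> [aya sya] [aza saz].
have a_yaz : a * (y * a * z) = a * z by rewrite !mulrA aya.
have yaz_a : y * a * z * a = y * a by rewrite -!mulrA (mulrA a) aza.
exists (y * a * z); rewrite a_yaz yaz_a; split=> //; split=> //.
by rewrite -mulrA a_yaz mulrA.
Qed.

End StarRing.

Theorem proposition2p17 (R : pzRingType) (inv : R -> R) (a : R) :
  involution inv ->
  (left_bc_invertible a (inv a) 1 <-> exists y, inverse14 inv a y) /\
  (right_bc_invertible a 1 (inv a) <-> exists y, inverse13 inv a y) /\
  (MP_invertible inv a <->
     left_bc_invertible a (inv a) 1 /\ right_bc_invertible a 1 (inv a)).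
Proof.
move=> [invK [invM _]].
have left14 := left_star1_invertibleP invK invM a.
have right13 := right_1star_invertibleP invK invM a.
split=> //; split=> //; split.
- by move=> [y [aya [_ [say sya]]]]; split; [apply/left14 | apply/right13]; exists y.
- move=> [/left14 [y y14] /right13 [z z13]]; exact: MP_inverse13_14 y14 z13.
Qed.
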